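(* Let $R$ be a commutative ring with identity that is not an integral domain. If the girth of $\Gamma(R)$ is $4$ or $\infty$, then either $\gamma_t(\Gamma(R)) = \gamma(\Gamma(R))$ or $R\cong \mathbb{Z}_2\times D$ for some integral domain $D$.
   Context: All rings are commutative with identity. The zero-divisor graph $\Gamma(R)$ has vertex set $Z(R)^*$ (nonzero zero-divisors); distinct $r,s$ are adjacent iff $rs=0$, and $x$ is adjacent to itself iff $x^2=0$. A dominating set is $X\subseteq Z(R)^*$ such that every vertex not in $X$ is adjacent to some element of $X$; a total dominating set is $X$ such that every vertex (including those in $X$) is adjacent to some element of $X$ (self-adjacency counts). $\gamma,\gamma_t$ are the respective minimum cardinalities. The girth is the length of a shortest cycle through distinct vertices (loops not counted), $\infty$ if none. *)

From HB Require Import structures.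
From mathcomp Require Import all_boot all_order all_algebra.
From mathcomp Require Import boolp classical_sets cardinality.
Set Implicit Arguments. Unset Strict Implicit. Unset Printing Implicit Defensive.
Import GRing.Theory.
Local Open Scope ring_scope.
Local Open Scope classical_set_scope.

Section ZeroDivisorGraph.
Variable R : comNzRingType.

(* Z(R)^* : nonzero zero-divisors, the vertex set of Gamma(R). *)
Definition zdv_star : set R :=
  [set x | x != 0 /\ exists y : R, y != 0 /\ x * y = 0].

Definition zdg_adj (x y : R) : Prop :=
  (x <> y /\ x * y = 0) \/ (x = y /\ x * x = 0).

Definition dominating (X : set R) : Prop :=
  X `<=` zdv_star /\
  forall v, zdv_star v -> ~ X v -> exists2 x, X x & zdg_adj v x.

Definition total_dominating (X : set R) : Prop :=
  X `<=` zdv_star /\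
  forall v, zdv_star v -> exists2 x, X x & zdg_adj v x.

(* gamma(Gamma(R)) = gamma_t(Gamma(R)) as (possibly infinite) cardinals:
   a minimum-cardinality dominating set and a minimum-cardinality total
   dominating set have the same cardinality. *)
Definition gamma_eq_gammat : Prop :=
  exists X Y : set R,
    [/\ dominating X, (forall X', dominating X' -> (X #<= X')%card),
        total_dominating Y, (forall Y', total_dominating Y' -> (Y #<= Y')%card)
      & (X #= Y)%card].

Definition has_cycle (n : nat) : Prop :=
  (3 <= n)%N /\
  exists v : 'I_n -> R,
    [/\ injective v, (forall i, zdv_star (v i))
      & forall i, zdg_adj (v i) (v (ordS i))].

(* girth_is (Some n): the shortest cycle has length n;
   girth_is None: girth is infinity (no cycle). *)
Definition girth_is (g : option nat) : Prop :=
  match g with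
  | Some n => has_cycle n /\ forall m, (m < n)%N -> ~ has_cycle m
  | None => forall m, ~ has_cycle m
  end.

End ZeroDivisorGraph.

Definition is_integral_domain (R : comNzRingType) : Prop :=
  forall a b : R, a * b = 0 -> a = 0 \/ b = 0.

From HB Require Import structures.
From mathcomp Require Import all_boot all_order all_algebra.
From mathcomp Require Import boolp classical_sets cardinality.
Set Implicit Arguments. Unset Strict Implicit. Unset Printing Implicit Defensive.
Import GRing.Theory.
Local Open Scope ring_scope.
Local Open Scope classical_set_scope.

(* Girth 4 or infinity means that Gamma(R) has no triangle.  Then, for R not
   a domain, either some vertex is adjacent to all the others or two vertices
   a, b dominate the graph: for R reduced any a, b with ab = 0 do; otherwise
   pick u <> 0 with u^2 = 0: if 2u <> 0 then u is universal, and if 2u = 0 the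
   annihilators of the non-neighbours of u supply the pair.  Without a
   universal vertex such a pair gives gamma = gamma_t = 2.  A universal vertex
   c with c^2 = 0, or else c^2 when c^2 <> c, annihilates every vertex and
   gives gamma = gamma_t = 1.  Finally a universal idempotent c forces
   Rc = {0, c} and R(1 - c) to be a domain, so R = Z_2 x R(1 - c). *)

Lemma card_set1_le (T : Type) (a c : T) (X : set T) :
  X c -> ([set a] #<= X)%card.
Proof.
move=> Xc; have -> : [set a] = (fun=> a) @` [set c] by rewrite image_set1.
by apply: card_le_trans (card_image_le _ _) (subset_card_le _) => _ ->.
Qed.

Lemma card_set2_le (T : eqType) (a b c d : T) (X : set T) :
  c != d -> X c -> X d -> ([set a; b] #<= X)%card.
Proof.
move=> cd Xc Xd.
have -> : [set a; b] = (fun z => if z == c then a else b) @` [set c; d].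
  by rewrite image_setU !image_set1 eqxx eq_sym (negbTE cd).
by apply: card_le_trans (card_image_le _ _) (subset_card_le _) => _ [] ->.
Qed.

Section Domination.
Variable R : comNzRingType.
Implicit Types (a b c v x : R) (X : set R).

Lemma zdg_adjE u w : zdg_adj u w <-> u * w = 0 :> R.
Proof.
split=> [[[_ ->]|[-> ->]] //|uw].
case: (eqVneq u w) => [uw'|]; last by left; split=> //; apply/eqP.
by right; split=> //; rewrite {2}uw'.
Qed.

Definition universal_vertex c :=
  zdv_star c /\ forall v, zdv_star v -> v != c -> v * c = 0.

Definition dominating_pair a b := [/\ zdv_star a, zdv_star b
  & forall v, zdv_star v -> v * a = 0 \/ v * b = 0].

Lemma total_dominating_dominating X : total_dominating X -> dominating X.
Proof. by case=> sub dom; split=> // v Zv _; exact: dom. Qed.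

Lemma dominating_inhabited X a : dominating X -> zdv_star a -> exists c, X c.
Proof.
case=> _ dom Za; case: (pselect (X a)) => [|nXa]; first by exists a.
by have [c Xc _] := dom a Za nXa; exists c.
Qed.

Lemma dominating_two_points X a : dominating X -> zdv_star a ->
  ~ (exists c, universal_vertex c) -> exists c d, [/\ X c, X d & c != d].
Proof.
move=> domX Za nouniv; have [c Xc] := dominating_inhabited domX Za.
case: (pselect (exists2 d, X d & d != c)) => [[d Xd dc]|single].
  by exists c, d; rewrite eq_sym.
case: nouniv; exists c; case: domX => sub dom.
split=> [|v Zv vc]; first exact: sub.
have [y Xy /zdg_adjE vy] : exists2 y, X y & zdg_adj v y.
  by apply: dom => // Xv; apply: single; exists v.
by case: (eqVneq y c) => [<-//|yc]; case: single; exists y.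
Qed.

Lemma gamma_eq_gammat_of_annihilator x : x != 0 -> x * x = 0 ->
  (forall v, zdv_star v -> v * x = 0) -> gamma_eq_gammat R.
Proof.
move=> x0 xx ann; have Zx : zdv_star x by split=> //; exists x.
have tot : total_dominating [set x].
  by split=> [_ ->|v Zv] //; exists x => //; apply/zdg_adjE/ann.
have card_le X : dominating X -> ([set x] #<= X)%card.
  by move=> domX; have [c Xc] := dominating_inhabited domX Zx; exact: card_set1_le Xc.
exists [set x], [set x]; split=> //; first exact: total_dominating_dominating.
by move=> Y /total_dominating_dominating; exact: card_le.
Qed.

Lemma gamma_eq_gammat_of_dominating_pair a b : dominating_pair a b ->
  ~ (exists c, universal_vertex c) -> gamma_eq_gammat R.
Proof.
case=> Za Zb dom nouniv.
have tot : total_dominating [set a; b].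
  split=> [_ [] ->|v Zv] //.
  by case: (dom v Zv) => vab; [exists a; [left|]|exists b; [right|]];
    try apply/zdg_adjE.
have card_le X : dominating X -> ([set a; b] #<= X)%card.
  move=> domX; have [c [d [Xc Xd cd]]] := dominating_two_points domX Za nouniv.
  exact: card_set2_le cd Xc Xd.
exists [set a; b], [set a; b]; split=> //; first exact: total_dominating_dominating.
by move=> Y /total_dominating_dominating; exact: card_le.
Qed.

End Domination.

Definition triangle_free (R : comNzRingType) :=
  forall x y z : R, x != 0 -> y != 0 -> z != 0 -> x != y -> y != z -> x != z ->
  x * y = 0 -> y * z = 0 -> x * z = 0 -> False.

Lemma neq_of_sqr_neq0 (R : comNzRingType) (x y : R) :
  x * x != 0 -> x * y = 0 -> x != y.
Proof. by move=> xx0 xy; apply: contraNneq xx0 => yx; rewrite {2}yx xy. Qed.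

Section TriangleFree.
Variable R : comNzRingType.
Hypothesis tf : triangle_free R.
Implicit Types (a b c t u v w x y : R).

Lemma reduced_dominating_pair a b : (forall x, x != 0 -> x * x != 0) ->
  a != 0 -> b != 0 -> a * b = 0 -> dominating_pair a b.
Proof.
move=> red a0 b0 ab; split; first by split=> //; exists b.
  by split=> //; exists a; rewrite mulrC.
move=> v [v0 [w [w0 vw]]].
case: (eqVneq (v * a) 0) => [|va]; first by left.
case: (eqVneq (v * b) 0) => [|vb]; first by right.
(* otherwise [v * a], [v * b] and [w] form a triangle *)
have e1 : v * a * (v * b) = 0 by rewrite mulrACA ab mulr0.
have e2 : v * b * w = 0 by rewrite mulrAC vw mul0r.
have e3 : v * a * w = 0 by rewrite mulrAC vw mul0r.
by case: (tf va vb w0 (neq_of_sqr_neq0 (red _ va) e1)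
  (neq_of_sqr_neq0 (red _ vb) e2) (neq_of_sqr_neq0 (red _ va) e3) e1 e2 e3).
Qed.

Lemma sqr_eq0_pair x y : x != 0 -> y != 0 -> x * x = 0 -> y * y = 0 ->
  x * y = 0 -> y = x \/ y = - x.
Proof.
move=> x0 y0 xx yy xy.
case: (eqVneq y x) => [|yx]; first by left.
case: (eqVneq y (- x)) => [|ynx]; first by right.
(* otherwise [x], [y] and [x + y] form a triangle *)
have xy0 : x + y != 0 by rewrite addrC addr_eq0.
have neq_add (z z' : R) : z' != 0 -> z != z + z'.
  by move=> z'0; rewrite -subr_eq0 opprD addrA subrr sub0r oppr_eq0.
case: (tf x0 y0 xy0 _ _ _ xy); first by rewrite eq_sym.
- by rewrite addrC neq_add.
- exact: neq_add.
- by rewrite mulrDr mulrC xy yy addr0.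
- by rewrite mulrDr xx xy addr0.
Qed.

Lemma mul_sqr_eq0 u r : u != 0 -> u * u = 0 ->
  [\/ r * u = 0, r * u = u | r * u = - u].
Proof.
move=> u0 uu; case: (eqVneq (r * u) 0) => [|ru0]; first by constructor 1.
have ruu : r * u * (r * u) = 0 by rewrite mulrACA uu mulr0.
have uru : u * (r * u) = 0 by rewrite mulrCA uu mulr0.
by case: (sqr_eq0_pair u0 ru0 uu ruu uru); [constructor 2|constructor 3].
Qed.

Lemma universal_of_sqr_eq0 u : u != 0 -> u * u = 0 -> u + u != 0 ->
  universal_vertex u.
Proof.
move=> u0 uu u2.
have nu0 : - u != 0 by rewrite oppr_eq0.
have unu : u != - u by apply: contraNneq u2 => {1}->; rewrite addNr.
have ann a : a * u = 0 -> [\/ a = 0, a = u | a = - u].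
  move=> au; case: (eqVneq a 0) => [|a0]; first by constructor 1.
  case: (eqVneq a u) => [|au']; first by constructor 2.
  case: (eqVneq a (- u)) => [|anu]; first by constructor 3.
  by case: (tf a0 u0 nu0 au' unu anu au); rewrite mulrN ?uu ?au oppr0.
split=> [|v [_ [w [w0 vw]]] _]; first by split=> //; exists u.
case: (eqVneq (v * u) 0) => // vu0; exfalso.
have wu : w * u = 0.
  case: (mul_sqr_eq0 v u0 uu) => [/eqP|vu|vu]; first by rewrite (negbTE vu0).
    by rewrite -vu mulrA (mulrC w) vw mul0r.
  by rewrite -[u]opprK -vu mulrN mulrA (mulrC w) vw mul0r oppr0.
case: (ann w wu) => wE; first by rewrite wE eqxx in w0.
  by rewrite -wE vw eqxx in vu0.
by move/eqP: vw; rewrite wE mulrN oppr_eq0 (negbTE vu0).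
Qed.

Section SqrZeroChar2.
Variable u : R.
Hypotheses (u0 : u != 0) (uu : u * u = 0) (u2 : u + u = 0).

Lemma oppr_char2 : - u = u.
Proof. by apply/eqP; rewrite eq_sym -addr_eq0 u2. Qed.

Lemma mul_sqr_eq0_char2 r : r * u = 0 \/ r * u = u.
Proof. by case: (mul_sqr_eq0 r u0 uu) => ->; rewrite ?oppr_char2; auto. Qed.

Lemma ann_of_non_neighbour v w : v * u = u -> v * w = 0 -> w * u = 0.
Proof. by move=> vu vw; rewrite -vu mulrA (mulrC w) vw mul0r. Qed.

Lemma ann_of_non_neighbour_neq v w : v * u = u -> v * w = 0 -> w != u.
Proof. by move=> vu vw; apply: contraNneq u0 => wu; rewrite -vu -wu vw. Qed.

Lemma sqr_neq0_of_ann x : x * u = 0 -> x != 0 -> x != u -> x * x != 0.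
Proof.
move=> xu x0 xnu; apply/eqP => xx.
by case: (sqr_eq0_pair u0 x0 uu xx); rewrite ?oppr_char2 ?(mulrC u) // => xE;
  rewrite xE eqxx in xnu.
Qed.

Lemma mul_ann_cases v a w : v * u = u -> a * u = 0 -> w != 0 -> v * w = 0 ->
  [\/ v * a = 0, v * a = u | v * a = w].
Proof.
move=> vu au w0 vw.
case: (eqVneq (v * a) 0) => [|va0]; first by constructor 1.
case: (eqVneq (v * a) u) => [|vau]; first by constructor 2.
case: (eqVneq (v * a) w) => [|vaw]; first by constructor 3.
case: (tf va0 w0 u0 vaw (ann_of_non_neighbour_neq vu vw) vau).
- by rewrite mulrAC vw mul0r.
- exact: ann_of_non_neighbour vu vw.
- by rewrite -mulrA au mulr0.
Qed.

Lemma idempotent_dominating t : t != 0 -> t * t = t ->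
  (forall r, r * t = 0 \/ r * t = t) -> t * u = 0 ->
  forall x, zdv_star x -> x * t = 0 \/ x * u = 0.
Proof.
move=> t0 tt rt tu x [x0 [y [y0 xy]]].
case: (rt x) => xt; [by left | right].
pose s := x - t; pose s' := y - y * t.
have st : s * t = 0 by rewrite mulrBl xt tt subrr.
have s't : s' * t = 0 by rewrite mulrBl -mulrA tt subrr.
have xs' : x * s' = 0 by rewrite mulrBr xy mulrA xy mul0r subrr.
have ss' : s * s' = 0 by rewrite mulrBl xs' mulrC s't subrr.
have s'0 : s' != 0.
  rewrite subr_eq0; apply/eqP => yE; case: (rt y) => yt; rewrite yt in yE.
    by rewrite yE eqxx in y0.
  by move: xy; rewrite yE xt; apply/eqP.
have -> : x = s + t by rewrite subrK.
rewrite mulrDl tu addr0; case: (eqVneq s 0) => [->|s0]; first by rewrite mul0r.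
(* [s], [t] and [s'] would form a triangle unless [s = s'], so [s * s = 0] *)
have tt0 : t * t != 0 by rewrite tt.
have ss : s * s = 0.
  case: (eqVneq s s') => [{2}->//|ss'_neq].
  case: (tf s0 t0 s'0 _ _ ss'_neq st _ ss').
  - by rewrite eq_sym (neq_of_sqr_neq0 tt0) // mulrC.
  - by rewrite (neq_of_sqr_neq0 tt0) // mulrC.
  - by rewrite mulrC.
case: (mul_sqr_eq0_char2 s) => // su.
by move: u0; rewrite -su -{1}su mulrA ss mul0r eqxx.
Qed.

Lemma dominating_pair_of_singleton_ann v t :
  zdv_star v -> t * u = 0 -> t != u ->
  (forall w, w != 0 -> v * w = 0 -> w = t) -> dominating_pair t u.
Proof.
move=> [_ [w [w0 vw]]] tu tnu ann.
have wt := ann w w0 vw; rewrite {}wt in w0 vw.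
have tt : t * t = t.
  apply: ann; [exact: sqr_neq0_of_ann | by rewrite mulrA vw mul0r].
have rt r : r * t = 0 \/ r * t = t.
  case: (eqVneq (r * t) 0) => [|rt0]; [by left | right].
  by apply: ann; rewrite // mulrCA vw mulr0.
split; [by split=> //; exists u | by split=> //; exists u |].
exact: idempotent_dominating.
Qed.

Lemma sqr_zero_char2_universal_or_dominating_pair :
  (exists c, universal_vertex c) \/ (exists a b, dominating_pair a b).
Proof.
have Zu : zdv_star u by split=> //; exists u.
case: (pselect (exists2 v, zdv_star v & v * u != 0)) => [[v0 Zv0 v0u]|];
  last first.
  move=> all_adj; left; exists u; split=> // v Zv _.
  by apply: contra_notP all_adj => /eqP vu; exists v.
have v0uu : v0 * u = u.
  by case: (mul_sqr_eq0_char2 v0) => // v0u0; rewrite v0u0 eqxx in v0u.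
case: Zv0 => v00 [w0 [w00 v0w0]].
have w0u := ann_of_non_neighbour v0uu v0w0.
case: (pselect (exists v, [/\ zdv_star v, v * u != 0 & v * w0 != 0])); last first.
  move=> dom; right; exists u, w0; split=> //.
    by split=> //; exists v0; split=> //; rewrite mulrC.
  move=> v Zv; case: (eqVneq (v * u) 0) => [|vu]; [by left | right].
  by apply: contra_notP dom => /eqP vw0; exists v.
(* a non-neighbour [v] of both [u] and [w0] has [v * w0] as its only
   nonzero annihilator, an idempotent which together with [u] dominates *)
case=> v [Zv vu0 vw00]; right; exists (v * w0), u.
have vu : v * u = u.
  by case: (mul_sqr_eq0_char2 v) => // vu; rewrite vu eqxx in vu0.
have tnu : v * w0 != u.
  by apply: contraNneq u0 => tE; rewrite -v0uu -tE mulrCA v0w0 mulr0.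
apply: (dominating_pair_of_singleton_ann Zv) => // [|w w_neq0 vw].
  by rewrite -mulrA w0u mulr0.
by case: (mul_ann_cases vu w0u w_neq0 vw) => vw0; move: vw00 tnu; rewrite vw0 ?eqxx.
Qed.

End SqrZeroChar2.

Lemma universal_or_dominating_pair a b : a != 0 -> b != 0 -> a * b = 0 ->
  (exists c, universal_vertex c) \/ (exists a b, dominating_pair a b).
Proof.
move=> a0 b0 ab.
case: (pselect (exists u, u != 0 /\ u * u = 0)) => [[u [u0 uu]]|reduced].
  case: (eqVneq (u + u) 0) => [u2|u2].
    exact: sqr_zero_char2_universal_or_dominating_pair u0 uu u2.
  by left; exists u; exact: universal_of_sqr_eq0.
right; exists a, b; apply: reduced_dominating_pair => // x x0.
by apply/negP => /eqP xx; apply: reduced; exists x.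
Qed.

End TriangleFree.

Record Z2_domain_splitting (R : comNzRingType) (c : R) : Prop := {
  splitting_idem : c * c = c;
  splitting_neq0 : c != 0;
  splitting_neq1 : c != 1;
  splitting_mul : forall r, r * c = 0 \/ r * c = c;
  splitting_integral :
    forall x y, x * c = 0 -> y * c = 0 -> x * y = 0 -> x = 0 \/ y = 0 }.

Definition corner_pred (R : comNzRingType) (c : R) : {pred R} :=
  fun x => x * c == 0.

Lemma corner_zmod_closed (R : comNzRingType) (c : R) :
  zmod_closed (corner_pred c).
Proof.
split=> [|x y]; rewrite !unfold_in /= ?mul0r // => /eqP xc /eqP yc.
by rewrite mulrBl xc yc subrr.
Qed.

HB.instance Definition _ (R : comNzRingType) (c : R) :=
  GRing.isZmodClosed.Build R (corner_pred c) (corner_zmod_closed c).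

(* The ideal [R (1 - c)], a ring with unit [1 - c]; the unused index [h]
   carries the hypotheses its ring structure depends on. *)
Inductive corner (R : comNzRingType) (c : R) (h : Z2_domain_splitting c)
  : predArgType := Corner x of x \in corner_pred c.
Arguments Corner {R c h x}.

Section CornerRing.
Variables (R : comNzRingType) (c : R) (h : Z2_domain_splitting c).
Local Notation D := (corner h).

Definition corner_val (x : D) : R := let: Corner x _ := x in x.
HB.instance Definition _ := [isSub of D for corner_val].
HB.instance Definition _ := [Choice of D by <:].
HB.instance Definition _ := [SubChoice_isSubZmodule of D by <:].

Lemma corner_mulc (x : D) : val x * c = 0.
Proof. exact/eqP/(valP x). Qed.

Lemma corner_one_subproof : 1 - c \in corner_pred c.
Proof. by rewrite unfold_in /= mulrBl mul1r splitting_idem // subrr. Qed.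

Lemma corner_mul_subproof (x y : D) : val x * val y \in corner_pred c.
Proof. by rewrite unfold_in /= -mulrA corner_mulc mulr0. Qed.

Definition corner_one : D := Corner corner_one_subproof.
Definition corner_mul (x y : D) : D := Corner (corner_mul_subproof x y).

Lemma corner_mulA : associative corner_mul.
Proof. by move=> x y z; apply: val_inj; rewrite /= mulrA. Qed.

Lemma corner_mulC : commutative corner_mul.
Proof. by move=> x y; apply: val_inj; rewrite /= mulrC. Qed.

Lemma corner_mul1 : left_id corner_one corner_mul.
Proof.
by move=> x; apply: val_inj; rewrite /= mulrBl mul1r mulrC corner_mulc subr0.
Qed.

Lemma corner_mulDl : left_distributive corner_mul +%R.
Proof. by move=> x y z; apply: val_inj; rewrite /= mulrDl. Qed.

Lemma corner_one_neq0 : corner_one != 0.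
Proof.
apply: contraNneq (splitting_neq1 h) => /(congr1 val) /= /eqP.
by rewrite subr_eq0 eq_sym.
Qed.

HB.instance Definition _ := GRing.Zmodule_isComNzRing.Build D
  corner_mulA corner_mulC corner_mul1 corner_mulDl corner_one_neq0.

Definition corner_unit : {pred D} := fun x => `[< exists y : D, y * x = 1 >].

Definition corner_inv (x : D) : D :=
  if pselect (exists y : D, y * x = 1) is left e then projT1 (cid e) else x.

Lemma corner_mulV : {in corner_unit, left_inverse 1 corner_inv *%R}.
Proof.
move=> x /asboolP x_unit; rewrite /corner_inv.
by case: pselect => [e|//]; exact: projT2 (cid e).
Qed.

Lemma corner_unitP (x y : D) : y * x = 1 -> corner_unit x.
Proof. by move=> yx; apply/asboolP; exists y. Qed.

Lemma corner_inv_out : {in [predC corner_unit], corner_inv =1 id}.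
Proof.
move=> x; rewrite inE /= unfold_in => /asboolP x_nonunit.
by rewrite /corner_inv; case: pselect.
Qed.

HB.instance Definition _ := GRing.ComNzRing_hasMulInverse.Build D
  corner_mulV corner_unitP corner_inv_out.

Lemma corner_integral : GRing.integral_domain_axiom D.
Proof.
move=> x y /(congr1 corner_val) /= xy0.
have [x0|y0] := splitting_integral h (corner_mulc x) (corner_mulc y) xy0.
  by rewrite (_ : x = 0) ?eqxx //; exact: val_inj.
by rewrite (_ : y = 0) ?eqxx ?orbT //; exact: val_inj.
Qed.

HB.instance Definition _ := GRing.ComUnitRing_isIntegral.Build D corner_integral.

Lemma splitting_char2 : c + c = 0.
Proof.
have [|/eqP] := splitting_mul h (1 + 1); rewrite mulrDl mul1r // -subr_eq0 addrK.
by rewrite (negbTE (splitting_neq0 h)).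
Qed.

Lemma corner_proj_subproof (x : R) : x * (1 - c) \in corner_pred c.
Proof. by rewrite unfold_in /= -mulrA (eqP corner_one_subproof) mulr0. Qed.

Definition Z2_split (x : R) : 'Z_2 * D :=
  ((x * c != 0)%:R, Corner (corner_proj_subproof x)).

Lemma Z2_split_zmod_morphism : zmod_morphism Z2_split.
Proof.
move=> x y; congr pair; last by apply: val_inj; rewrite /= mulrBl.
rewrite mulrBl; have cc := splitting_char2; have c0 := splitting_neq0 h.
case: (splitting_mul h x) => xc; case: (splitting_mul h y) => yc;
  by rewrite /= xc yc ?subrr ?subr0 ?sub0r ?oppr_eq0 ?c0 ?eqxx; apply: val_inj.
Qed.

Lemma Z2_split_monoid_morphism : monoid_morphism Z2_split.
Proof.
have c0 := splitting_neq0 h; split.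
  rewrite /Z2_split mul1r c0 (_ : 1 = (1, 1)) //; congr pair.
  by apply: val_inj; rewrite /= mul1r.
move=> x y; congr pair.
  case: (splitting_mul h y) => yc;
    by rewrite /= -mulrA yc ?mulr0 ?eqxx ?c0 /= ?mulr0n ?mulr1n ?mulr0 ?mulr1.
have idem1 : (1 - c) * (1 - c) = 1 - c.
  by rewrite mulrBr mulr1 (eqP corner_one_subproof) subr0.
by apply: val_inj; rewrite /= mulrACA idem1.
Qed.

Lemma Z2_split_bijective : bijective Z2_split.
Proof.
have c0 := splitting_neq0 h.
exists (fun p => (if p.1 == 0 then 0 else c) + val p.2) => [x|[z d]] /=.
  rewrite mulrBr mulr1; case: (splitting_mul h x) => ->.
    by rewrite eqxx add0r subr0.
  by rewrite c0 addrC subrK.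
have hz : (if z == 0 then 0 else c) * c = if z == 0 then 0 else c.
  by case: ifP; rewrite ?mul0r ?(splitting_idem h).
rewrite /Z2_split mulrDl corner_mulc addr0 hz; congr pair.
  by case: z hz => [[|[|]] //= ?] _; rewrite ?eqxx ?c0; apply: val_inj.
apply: val_inj; rewrite /= mulrDl !mulrBr !mulr1 corner_mulc subr0 hz.
by rewrite subrr add0r.
Qed.

End CornerRing.

HB.instance Definition _ (R : comNzRingType) (c : R)
    (h : Z2_domain_splitting c) :=
  GRing.isZmodMorphism.Build _ _ (Z2_split h) (Z2_split_zmod_morphism h).
HB.instance Definition _ (R : comNzRingType) (c : R)
    (h : Z2_domain_splitting c) :=
  GRing.isMonoidMorphism.Build _ _ (Z2_split h) (Z2_split_monoid_morphism h).

Lemma Z2_domain_splitting_iso (R : comNzRingType) (c : R) :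
  Z2_domain_splitting c ->
  exists (D : idomainType) (f : {rmorphism R -> ('Z_2 * D)%type}), bijective f.
Proof.
by move=> h; exists (corner h), (Z2_split h); exact: Z2_split_bijective.
Qed.

Section UniversalVertex.
Variables (R : comNzRingType) (c : R).
Hypothesis univ : universal_vertex c.

Lemma universal_idempotent_splitting : c * c = c -> Z2_domain_splitting c.
Proof.
case: univ => -[c0 [y [y0 cy]]] ann idem.
have c1 : c != 1 by apply: contraNneq y0 => c1; rewrite -cy c1 mul1r.
split=> // [r|x z xc zc xz].
  case: (eqVneq (r * c) 0) => [|rc0]; first by left.
  case: (eqVneq (r * c) c) => [|rcc]; first by right.
  have Zrc : zdv_star (r * c).
    split=> //; exists (1 - c); split; first by rewrite subr_eq0 eq_sym.
    by rewrite mulrBr mulr1 -mulrA idem subrr.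
  by move: (ann _ Zrc rcc); rewrite -mulrA idem => /eqP; rewrite (negbTE rc0).
case: (eqVneq x 0) => [|x0]; first by left.
case: (eqVneq z 0) => [|z0]; first by right.
(* [x + c] is a vertex other than [c], so [c = (x + c) * c = 0]. *)
have Zxc : zdv_star (x + c).
  split; last by exists z; rewrite mulrDl xz mulrC zc addr0.
  apply: contraNneq c0 => /eqP; rewrite addr_eq0 => /eqP xE.
  by rewrite -oppr_eq0 -xc xE mulNr idem.
have := ann _ Zxc; rewrite -subr_eq0 addrK mulrDl xc add0r idem => /(_ x0) c_eq0.
by rewrite c_eq0 eqxx in c0.
Qed.

Lemma universal_vertex_gamma_or_splitting :
  gamma_eq_gammat R \/ Z2_domain_splitting c.
Proof.
case: (univ) => -[c0 [y [y0 cy]]] ann.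
case: (eqVneq (c * c) 0) => [cc0|cc0].
  left; apply: (gamma_eq_gammat_of_annihilator c0 cc0) => v Zv.
  by case: (eqVneq v c) => [->|]; [|exact: ann].
case: (eqVneq (c * c) c) => [idem|idem].
  by right; exact: universal_idempotent_splitting.
(* otherwise [c * c] is a vertex other than [c], hence annihilated by [c] *)
have Zcc : zdv_star (c * c) by split=> //; exists y; rewrite -mulrA cy mulr0.
have ccc : c * c * c = 0 := ann _ Zcc idem.
left; apply: (gamma_eq_gammat_of_annihilator cc0); first by rewrite mulrA ccc mul0r.
move=> v Zv; case: (eqVneq v c) => [->|vc]; first by rewrite mulrC.
by rewrite mulrA (ann v Zv vc) mul0r.
Qed.

End UniversalVertex.

Lemma triangle_free_of_girth (R : comNzRingType) :
  girth_is R (Some 4%N) \/ girth_is R None -> triangle_free R.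
Proof.
move=> girth x y z x0 y0 z0 xy yz xz exy eyz exz.
have no3 : ~ has_cycle R 3 by case: girth => [[_]|]; apply.
apply: no3; split=> //; exists (fun i : 'I_3 => nth 0 [:: x; y; z] i); split.
- move=> i j /eqP; rewrite nth_uniq //= ?inE ?negb_or ?xy ?xz ?yz // => /eqP.
  exact: val_inj.
- case=> [[|[|[|]]] //= _]; split=> //.
  + by exists y.
  + by exists z.
  + by exists x; rewrite mulrC.
- by case=> [[|[|[|]]] //= _]; apply/zdg_adjE; rewrite // mulrC.
Qed.

Theorem corollary3p6 (R : comNzRingType) :
  ~ is_integral_domain R ->
  (girth_is R (Some 4%N) \/ girth_is R None) ->
  gamma_eq_gammat R \/
  exists (D : idomainType) (f : {rmorphism R -> ('Z_2 * D)%type}), bijective f.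
Proof.
move=> not_domain /triangle_free_of_girth tf.
have [a [b [a0 b0 ab]]] : exists a b : R, [/\ a != 0, b != 0 & a * b = 0].
  apply: contra_notP not_domain => no_pair a b ab.
  case: (eqVneq a 0) => [|a0]; [by left | right].
  by case: (eqVneq b 0) => // b0; case: no_pair; exists a, b.
case: (pselect (exists c : R, universal_vertex c)) => [[c univ]|nouniv].
  case: (universal_vertex_gamma_or_splitting univ) => [|split]; first by left.
  by right; exact: Z2_domain_splitting_iso split.
left; case: (universal_or_dominating_pair tf a0 b0 ab) => [//|[a' [b' dom]]].
exact: gamma_eq_gammat_of_dominating_pair dom nouniv.
Qed.
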